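(* Let $\Sigma_C\subseteq N_C$ and $\Sigma_R\subseteq N_R$ be finite, let $B\in N_C\setminus\Sigma_C$, and let $\mathcal R$ be the TBox consisting of the axioms $B\sqsubseteq A$ for every $A\in\Sigma_C$ and $B\sqsubseteq\forall r.B$ for every $r\in\Sigma_R$. Let $\mathcal J$ be a model of $\mathcal R$ and $\mathcal I$ an interpretation with $\Delta^{\mathcal I}=\Delta^{\mathcal J}\setminus B^{\mathcal J}$, $A^{\mathcal I}=A^{\mathcal J}\setminus B^{\mathcal J}$ for every $A\in N_C$, and $r^{\mathcal I}=\{(x,y)\in r^{\mathcal J}\mid x\notin B^{\mathcal J},\ y\notin B^{\mathcal J}\}$ for every $r\in N_R$. Then for every word $w\in\Sigma_R^*$ and every $\mathcal{FL}_{\bot\mathit{reg}}$ concept description $M$ containing only concept names from $\Sigma_C$ and role names from $\Sigma_R$ such that $M^{\mathcal I}=(M^B)^{\mathcal J}\setminus B^{\mathcal J}$, we also have $(\forall w.M)^{\mathcal I}=(\forall w.M^B)^{\mathcal J}\setminus B^{\mathcal J}$. Here $M^B$ is obtained from $M$ by replacing every occurrence of $\bot$ with $B$, and $w$ is regarded as a regular role expression.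
   Context: Let $N_C$ and $N_R$ be disjoint countably infinite sets of concept names and role names. Regular role expressions are generated by $E ::= \emptyset \mid \varepsilon \mid r \mid (E+E) \mid (EE) \mid E^{*}$ with $r\in N_R$, with languages $\mathcal L(E)\subseteq N_R^*$. $\mathcal{FL}_{\bot\mathit{reg}}$ concept descriptions: $C ::= A \mid \top \mid \bot \mid (C\sqcap C) \mid \forall E.C$ with $A\in N_C$. An interpretation $\mathcal I$ has a domain $\Delta^{\mathcal I}$, $A^{\mathcal I}\subseteq\Delta^{\mathcal I}$, $r^{\mathcal I}\subseteq(\Delta^{\mathcal I})^2$; $E^{\mathcal I}$ is the union over $r_1\cdots r_n\in\mathcal L(E)$ of $r_1^{\mathcal I}\circ\cdots\circ r_n^{\mathcal I}$ (identity for the empty word); $\top^{\mathcal I}=\Delta^{\mathcal I}$, $\bot^{\mathcal I}=\emptyset$, $\sqcap$ is intersection, $(\forall E.C)^{\mathcal I}=\{x\in\Delta^{\mathcal I}\mid y\in C^{\mathcal I}$ whenever $(x,y)\in E^{\mathcal I}\}$. $\mathcal J$ is a model of a TBox (finite set of axioms $K\sqsubseteq M$) if $K^{\mathcal J}\subseteq M^{\mathcal J}$ for all its axioms. *)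

From Stdlib Require Import List.
Import ListNotations.
Set Implicit Arguments.

(* N_C and N_R: two disjoint countably infinite sets, modelled as two
   distinct copies of nat. *)
Definition cname := nat.
Definition rname := nat.

Inductive regexp : Type :=
| RNone : regexp
| REps : regexp
| RRole : rname -> regexp
| RPlus : regexp -> regexp -> regexp
| RConc : regexp -> regexp -> regexp
| RStar : regexp -> regexp.

Inductive lang : regexp -> list rname -> Prop :=
| lang_eps : lang REps []
| lang_role : forall r, lang (RRole r) [r]
| lang_plusl : forall E F w, lang E w -> lang (RPlus E F) w
| lang_plusr : forall E F w, lang F w -> lang (RPlus E F) w
| lang_conc : forall E F u v, lang E u -> lang F v -> lang (RConc E F) (u ++ v)
| lang_star0 : forall E, lang (RStar E) []
| lang_starS : forall E u v, lang E u -> lang (RStar E) v -> lang (RStar E) (u ++ v).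

Inductive concept : Type :=
| CAtom : cname -> concept
| CTop : concept
| CBot : concept
| CAnd : concept -> concept -> concept
| CAll : regexp -> concept -> concept.

(* An interpretation over an ambient carrier type D: the domain is a subset of D. *)
Record interp (D : Type) := {
  dom : D -> Prop;
  cn : cname -> D -> Prop;
  rn : rname -> D -> D -> Prop }.

Definition is_interp D (I : interp D) : Prop :=
  (forall A x, cn I A x -> dom I x) /\
  (forall r x y, rn I r x y -> dom I x /\ dom I y).

Fixpoint wrel D (I : interp D) (w : list rname) (x y : D) : Prop :=
  match w with
  | [] => x = y /\ dom I x
  | r :: w' => exists z, rn I r x z /\ wrel I w' z y
  end.

Definition rsem D (I : interp D) (E : regexp) (x y : D) : Prop :=
  exists w, lang E w /\ wrel I w x y.

Fixpoint csem D (I : interp D) (C : concept) (x : D) : Prop :=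
  match C with
  | CAtom A => cn I A x
  | CTop => dom I x
  | CBot => False
  | CAnd C1 C2 => csem I C1 x /\ csem I C2 x
  | CAll E C' => dom I x /\ forall y, rsem I E x y -> csem I C' y
  end.

Definition tbox := list (concept * concept).

Definition is_model D (J : interp D) (T : tbox) : Prop :=
  forall K M, In (K, M) T -> forall x, csem J K x -> csem J M x.

Definition tboxR (SC : list cname) (SR : list rname) (B : cname) : tbox :=
  map (fun A => (CAtom B, CAtom A)) SC ++
  map (fun r => (CAtom B, CAll (RRole r) (CAtom B))) SR.

Fixpoint re_sig (SR : list rname) (E : regexp) : Prop :=
  match E with
  | RNone | REps => True
  | RRole r => In r SR
  | RPlus E F | RConc E F => re_sig SR E /\ re_sig SR F
  | RStar E => re_sig SR E
  end.

Fixpoint concept_sig (SC : list cname) (SR : list rname) (C : concept) : Prop :=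
  match C with
  | CAtom A => In A SC
  | CTop | CBot => True
  | CAnd C1 C2 => concept_sig SC SR C1 /\ concept_sig SC SR C2
  | CAll E C' => re_sig SR E /\ concept_sig SC SR C'
  end.

Fixpoint replBot (B : cname) (C : concept) : concept :=
  match C with
  | CAtom A => CAtom A
  | CTop => CTop
  | CBot => CAtom B
  | CAnd C1 C2 => CAnd (replBot B C1) (replBot B C2)
  | CAll E C' => CAll E (replBot B C')
  end.

Fixpoint word_re (w : list rname) : regexp :=
  match w with
  | [] => REps
  | r :: w' => RConc (RRole r) (word_re w')
  end.

From Stdlib Require Import List Classical.
Import ListNotations.

(* The TBox makes B^J closed under Sigma-role successors and forces every
   Sigma-concept M^B to hold on B^J.  Hence a Sigma-word path of J starting
   outside B either stays outside B, where it is exactly a path of I, or enters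
   B^J and ends there, where M^B holds anyway.  So both sides of the equation
   quantify over the same relevant successors. *)

Lemma lang_word_re w v : lang (word_re w) v <-> v = w.
Proof.
  split.
  - revert v; induction w as [|r w IH]; simpl; intros v Hv.
    + inversion Hv; reflexivity.
    + inversion Hv as [| | | |E F u v' Hr Hw| |]; subst.
      inversion Hr; subst; simpl; f_equal; auto.
  - intros ->; induction w as [|r w IH]; simpl.
    + constructor.
    + change (r :: w) with ([r] ++ w); apply lang_conc; [constructor | exact IH].
Qed.

Lemma rsem_word_re D (I : interp D) w x y : rsem I (word_re w) x y <-> wrel I w x y.
Proof.
  split.
  - intros [v [Hv Hw]]; apply lang_word_re in Hv; subst v; exact Hw.
  - intros Hw; exists w; split; [apply lang_word_re; reflexivity | exact Hw].
Qed.

Lemma lang_re_sig SR E v : re_sig SR E -> lang E v -> Forall (fun r => In r SR) v.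
Proof.
  intros HE Hv; induction Hv; simpl in *; try apply Forall_app; intuition.
Qed.

Section TBoxModel.

Variables (SC : list cname) (SR : list rname) (B : cname) (D : Type) (J : interp D).
Hypothesis J_interp : is_interp J.
Hypothesis J_model : is_model J (tboxR SC SR B).

Lemma tboxR_atom A x : In A SC -> cn J B x -> cn J A x.
Proof.
  intros HA; apply (J_model (CAtom B) (CAtom A)).
  apply in_or_app; left; apply in_map_iff; eauto.
Qed.

Lemma tboxR_role r x y : In r SR -> cn J B x -> rn J r x y -> cn J B y.
Proof.
  intros Hr HBx Hxy.
  assert (Hax : In (CAtom B, CAll (RRole r) (CAtom B)) (tboxR SC SR B)).
  { apply in_or_app; right; apply in_map_iff; eauto. }
  apply (J_model _ _ Hax x HBx); exists [r]; split; [constructor |].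
  exists y; split; [exact Hxy |]; split; [reflexivity | exact (proj2 (proj2 J_interp r x y Hxy))].
Qed.

Lemma wrel_B_closed w x y :
  Forall (fun r => In r SR) w -> wrel J w x y -> cn J B x -> cn J B y.
Proof.
  revert x; induction w as [|r w IH]; simpl; intros x Hw Hxy HBx.
  - destruct Hxy as [-> _]; exact HBx.
  - inversion Hw as [|r' w' Hr Hw']; subst; destruct Hxy as [z [Hxz Hzy]].
    exact (IH z Hw' Hzy (tboxR_role r x z Hr HBx Hxz)).
Qed.

Lemma csem_replBot_B M x : concept_sig SC SR M -> cn J B x -> csem J (replBot B M) x.
Proof.
  revert x; induction M as [A| | |M1 IH1 M2 IH2|E M IH]; simpl; intros x HM HBx.
  - exact (tboxR_atom A x HM HBx).
  - exact (proj1 J_interp B x HBx).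
  - exact HBx.
  - split; [apply IH1 | apply IH2]; tauto.
  - split; [exact (proj1 J_interp B x HBx) |].
    intros y [v [Hv Hxy]]; apply IH; [tauto |].
    exact (wrel_B_closed v x y (lang_re_sig SR E v (proj1 HM) Hv) Hxy HBx).
Qed.

Variable I : interp D.
Hypothesis I_dom : forall x, dom I x <-> dom J x /\ ~ cn J B x.
Hypothesis I_rn : forall r x y, rn I r x y <-> rn J r x y /\ ~ cn J B x /\ ~ cn J B y.

Lemma wrel_restrict w x y :
  Forall (fun r => In r SR) w -> ~ cn J B x ->
  wrel I w x y <-> wrel J w x y /\ ~ cn J B y.
Proof.
  revert x; induction w as [|r w IH]; simpl; intros x Hw HBx.
  - rewrite I_dom; split; [intros [-> HJ]; tauto | intros [[-> HJ] _]; tauto].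
  - inversion Hw as [|r' w' Hr Hw']; subst; split.
    + intros [z [Hxz Hzy]]; apply I_rn in Hxz.
      apply (IH z Hw' (proj2 (proj2 Hxz))) in Hzy; split; [exists z |]; tauto.
    + intros [[z [Hxz Hzy]] HBy].
      (* if z were in B, then so would be y, by closure *)
      assert (HBz : ~ cn J B z) by (intros HBz; exact (HBy (wrel_B_closed w z y Hw' Hzy HBz))).
      exists z; split; [apply I_rn; tauto | apply (IH z Hw' HBz); tauto].
Qed.

End TBoxModel.

Theorem lemma6 (SC : list cname) (SR : list rname) (B : cname)
  (D : Type) (J I : interp D) :
  ~ In B SC ->
  is_interp J ->
  is_model J (tboxR SC SR B) ->
  (forall x, dom I x <-> dom J x /\ ~ cn J B x) ->
  (forall A x, cn I A x <-> cn J A x /\ ~ cn J B x) ->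
  (forall r x y, rn I r x y <-> rn J r x y /\ ~ cn J B x /\ ~ cn J B y) ->
  forall (w : list rname) (M : concept),
    Forall (fun r => In r SR) w ->
    concept_sig SC SR M ->
    (forall x, csem I M x <-> csem J (replBot B M) x /\ ~ cn J B x) ->
    forall x, csem I (CAll (word_re w) M) x <->
              csem J (CAll (word_re w) (replBot B M)) x /\ ~ cn J B x.
Proof.
  intros _ HJ HMJ Hdom _ Hrn w M Hw HM HMeq x; simpl.
  pose proof (wrel_restrict SC SR B D J HJ HMJ I Hdom Hrn w x) as Hrestrict.
  setoid_rewrite rsem_word_re; rewrite Hdom; split.
  - intros [[HdJ HBx] HallI]; split; [split; [exact HdJ |] | exact HBx].
    intros y Hxy; destruct (classic (cn J B y)) as [HBy | HBy].
    + exact (csem_replBot_B SC SR B D J HJ HMJ M y HM HBy).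
    + apply HMeq, HallI, (Hrestrict y Hw HBx); tauto.
  - intros [[HdJ HallJ] HBx]; split; [tauto |].
    intros y Hxy; apply (Hrestrict y Hw HBx) in Hxy.
    apply HMeq; split; [apply HallJ |]; tauto.
Qed.
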